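(* Let $X$ satisfy assumptions (A) described in the context, with Lévy density $\nu$. If a measurable function $f:\mathbb{R}^d\to[0,\infty)$ satisfies $\int_{\mathbb{R}^d}f(y)(\nu(y)\wedge1)\,dy<\infty$, then for every $x\in\mathbb{R}^d$ we have $\int_{\mathbb{R}^d}f(y)(\nu(x-y)\wedge1)\,dy<\infty$.
   Context: Assumptions (A): (H0) $X$ is a pure-jump isotropic Lévy process in $\mathbb{R}^d$ whose Lévy measure is infinite with density $\nu(x)=\nu(|x|)$. (H1) $\nu(r)$ is nonincreasing, absolutely continuous, $-\nu'(r)/r$ nonincreasing (with $\nu(r)=-\int_r^\infty\nu'(\rho)d\rho$), and for some $a_1$: $\nu(r)\le a_1\nu(r+1)$ for $r\ge1$, $\nu(r)\le a_1\nu(2r)$ for $0<r\le1$. (H2) There is $a_2$ such that for every $x_0$, $r\in(0,1]$ and every $h\ge0$ on $\mathbb{R}^d$ harmonic in $B(x_0,r)$, $\sup_{B(x_0,r/2)}h\le a_2\inf_{B(x_0,r/2)}h$ (a Borel $f$ is harmonic in open $D$ if $f(x)=E^xf(X_{\tau_B})$, absolutely convergent, for $x\in B$, for all bounded open $B$ with $\overline B\subset D$, $\tau_B=\inf\{t>0:X_t\notin B\}$). *)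

From HB Require Import structures.
From mathcomp Require Import all_boot all_order all_algebra.
From mathcomp Require Import all_classical all_reals all_analysis.
Set Implicit Arguments. Unset Strict Implicit. Unset Printing Implicit Defensive.
Import Order.TTheory GRing.Theory Num.Theory Num.Def.
Import numFieldNormedType.Exports.
Local Open Scope classical_set_scope.
Local Open Scope ring_scope.

(* R^d is modelled as d.-tuple R, which mathcomp-analysis equips with the
   product (= Borel) sigma-algebra generated by the coordinate projections. *)

Section Defs.
Context {R : realType}.

(** Lebesgue integral over R^n of a nonnegative function, written as the
    iterated one-dimensional Lebesgue integral (Tonelli). *)
Fixpoint lebint (n : nat) : (n.-tuple R -> \bar R) -> \bar R :=
  match n with
  | 0 => fun g => g [tuple]
  | n'.+1 => fun g => (\int[@lebesgue_measure R]_(t in [set: R])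
                          lebint (fun v => g (cons_tuple t v)))%E
  end.

Variable d : nat.

Definition zerov : d.-tuple R := [tuple 0 | i < d].
Definition addv (x y : d.-tuple R) : d.-tuple R := [tuple tnth x i + tnth y i | i < d].
Definition subv (x y : d.-tuple R) : d.-tuple R := [tuple tnth x i - tnth y i | i < d].
Definition dotv (x y : d.-tuple R) : R := \sum_(i < d) tnth x i * tnth y i.
Definition enorm (x : d.-tuple R) : R := Num.sqrt (dotv x x).

Definition ballv (x : d.-tuple R) (r : R) : set (d.-tuple R) :=
  [set y | enorm (subv y x) < r].
Definition openv (D : set (d.-tuple R)) : Prop :=
  forall x, D x -> exists2 r : R, 0 < r & ballv x r `<=` D.
Definition boundedv (B : set (d.-tuple R)) : Prop :=
  exists M : R, forall y, B y -> enorm y <= M.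
Definition closurev (B : set (d.-tuple R)) : set (d.-tuple R) :=
  [set y | forall r : R, 0 < r -> exists2 z, B z & enorm (subv z y) < r].

(** (H0), part on the Levy density nu(x) = nu(|x|): nonnegative density of a
    Levy measure (int (|y|^2 /\ 1) nu(y) dy < oo) which is infinite. *)
Definition H0_density (nu : R -> R) : Prop :=
  [/\ forall r, 0 < r -> 0 <= nu r,
      (lebint (fun y : d.-tuple R => (minr (enorm y ^+ 2) 1 * nu (enorm y))%:E) < +oo)%E
    & lebint (fun y : d.-tuple R => (nu (enorm y))%:E) = +oo%E].

(** characteristic exponent psi(xi) = int (1 - cos(xi.y)) nu(y) dy of the
    pure-jump isotropic (hence symmetric, drift-free) Levy process *)
Definition levy_exponent (nu : R -> R) (xi : d.-tuple R) : R :=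
  fine (lebint (fun y : d.-tuple R => ((1 - cos (dotv xi y)) * nu (enorm y))%:E)).

Section Process.
Context {dO : measure_display} {O : measurableType dO} (P : probability O R).
Variable X : R -> O -> d.-tuple R.

(** (H0), part on X: X is a Levy process (X_0 = 0, cadlag paths, independent
    stationary increments) with Levy triplet (0, 0, nu(|y|) dy).  Independence
    and stationarity of increments together with the law are expressed via the
    joint characteristic function of the increments:
      E exp(i sum_k xi_k.(X_{t_{k+1}} - X_{t_k})) = prod_k exp(-(t_{k+1}-t_k) psi(xi_k)),
    split into real and imaginary parts. *)
Definition is_isotropic_pure_jump_levy (nu : R -> R) : Prop :=
  [/\ forall w, X 0 w = zerov,
      forall t, measurable_fun [set: O] (X t),
      forall w (i : 'I_d) (t : R), 0 <= t ->
        (fun s => tnth (X s w) i) x @[x --> t^'+] --> tnth (X t w) i,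
      forall w (i : 'I_d) (t : R), 0 < t ->
        exists l : R, (fun s => tnth (X s w) i) x @[x --> t^'-] --> l
    & forall (n : nat) (t : nat -> R) (xi : nat -> d.-tuple R),
        0 <= t 0%N -> (forall k, t k <= t k.+1) ->
        let S := fun w => \sum_(k < n) dotv (xi k) (subv (X (t k.+1) w) (X (t k) w)) in
        (\int[P]_w (cos (S w))%:E
           = (expR (- \sum_(k < n) (t k.+1 - t k) * levy_exponent nu (xi k)))%:E)%E
        /\ (\int[P]_w (sin (S w))%:E = 0)%E].

Definition exit_time (x : d.-tuple R) (B : set (d.-tuple R)) (w : O) : \bar R :=
  ereal_inf [set t%:E | t in [set t : R | 0 < t /\ ~ B (addv x (X t w))]].

(** f(X_{tau_B}) under P^x (taken to be 0 on {tau_B = +oo}) *)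
Definition at_exit (x : d.-tuple R) (B : set (d.-tuple R)) (f : d.-tuple R -> R)
    (w : O) : R :=
  if exit_time x B w is s%:E then f (addv x (X s w)) else 0.

Definition harmonic (f : d.-tuple R -> R) (D : set (d.-tuple R)) : Prop :=
  forall (B : set (d.-tuple R)) (x : d.-tuple R),
    openv B -> boundedv B -> closurev B `<=` D -> B x ->
    (\int[P]_w `|at_exit x B f w|%:E < +oo)%E /\
    (f x)%:E = (\int[P]_w (at_exit x B f w)%:E)%E.

Definition H2_harnack : Prop :=
  exists a2 : R, forall (x0 : d.-tuple R) (r : R), 0 < r <= 1 ->
    forall h : d.-tuple R -> R, measurable_fun [set: d.-tuple R] h ->
      (forall y, 0 <= h y) -> harmonic h (ballv x0 r) ->
      forall y z, ballv x0 (r / 2) y -> ballv x0 (r / 2) z -> h y <= a2 * h z.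
End Process.
End Defs.

Definition H1_profile {R : realType} (nu : R -> R) : Prop :=
  [/\ forall r s : R, 0 < r -> r <= s -> nu s <= nu r,
      exists nu' : R -> R,
        [/\ forall r : R, 0 < r ->
              (@lebesgue_measure R).-integrable `[r, +oo[ (fun rho => (nu' rho)%:E),
            forall r : R, 0 < r ->
              (nu r)%:E = (- \int[@lebesgue_measure R]_(rho in `[r, +oo[) (nu' rho)%:E)%E
          & forall r s : R, 0 < r -> r <= s -> - nu' s / s <= - nu' r / r]
    & exists a1 : R,
        (forall r : R, 1 <= r -> nu r <= a1 * nu (r + 1)) /\
        (forall r : R, 0 < r -> r <= 1 -> nu r <= a1 * nu (2 * r))].

From HB Require Import structures.
From mathcomp Require Import all_boot all_order all_algebra.
From mathcomp Require Import all_classical all_reals all_analysis.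
From mathcomp Require Import lra.
Set Implicit Arguments. Unset Strict Implicit. Unset Printing Implicit Defensive.
Import Order.TTheory GRing.Theory Num.Theory Num.Def.
Local Open Scope classical_set_scope.
Local Open Scope ring_scope.

(* Far from the origin, |x - y| >= |y| - 2 |x|_1, and finitely many unit steps
   of the growth condition in (H1) absorb this shift, so that
   nu(|x - y|) /\ 1 <= C (nu(|y|) /\ 1); near the origin the right-hand side
   is bounded below because nu > 0, which follows from the infiniteness of
   the Levy measure and (H1).  As nu(0) is unconstrained, every comparison is made off
   the hyperplane {y_0 = 0}, which [lebint] does not see. *)

(* No measurability is assumed in the lemmas below: the integrands occurring in
   the iterated integral [lebint] are not known to be measurable. *)
Section integral_off_point.
Context {R : realType}.
Local Notation mu := (@lebesgue_measure R).
Local Open Scope ereal_scope.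
Import HBNNSimple.
Variable a : R.

Lemma sintegral_off1_eq0 (h : {nnsfun measurableTypeR R >-> R}) :
  (forall t, t != a -> h t = 0%R) -> sintegral mu h = 0.
Proof.
move=> h0; rewrite sintegralE; apply: fsbig1 => r _.
have [->|rn0] := eqVneq r 0%R; first by rewrite mul0e.
rewrite [X in _ * X](_ : _ = 0) ?mule0 //.
apply/eqP; rewrite eq_le measure_ge0 andbT -(lebesgue_measure_set1 a).
apply: le_measure; rewrite ?inE; [exact: measurable_funPTI | exact: measurable_set1 |].
move=> t /= htr; apply/eqP; apply: contraT => ta.
by move: rn0; rewrite -htr h0 ?eqxx.
Qed.

Lemma integral_off1_eq0 (phi : R -> \bar R) : (forall t, 0 <= phi t) ->
  (forall t, t != a -> phi t = 0) -> \int[mu]_t phi t = 0.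
Proof.
move=> phi0 phia; apply/eqP; rewrite eq_le integral_ge0 ?andbT //.
rewrite ge0_integralE //; apply: ge_ereal_sup => _ [h hle <-].
rewrite sintegral_off1_eq0 // => t ta; apply/eqP; rewrite eq_le fun_ge0 andbT.
by rewrite -lee_fin; have := hle t; rewrite patch_setT phia.
Qed.

(* A simple function below [phi] is split along [[set a]] and its complement;
   the part on [[set a]] does not contribute to the integral. *)
Lemma le_nnintegral_off1 (phi psi : R -> \bar R) :
  (forall t, 0 <= phi t) -> (forall t, 0 <= psi t) ->
  (forall t, t != a -> phi t <= psi t) -> \int[mu]_t phi t <= \int[mu]_t psi t.
Proof.
move=> phi0 psi0 le_phi_psi; rewrite !ge0_integralE //.
apply: ge_ereal_sup => _ [h hle <-].
have ma : measurable [set a] by exact: measurable_set1.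
have mNa : measurable (~` [set a]) by exact: measurableC.
have in_a (t : R) : (t \in [set a]) = (t == a).
  by apply/idP/eqP => [/set_mem|->] //; exact: mem_set.
have in_Na (t : R) : (t \in ~` [set a]) = (t != a).
  by apply/idP/idP => [/set_mem/eqP|/eqP ?] //; exact: mem_set.
pose h_a := proj_nnsfun h ma.
pose h_Na := proj_nnsfun h mNa.
have -> : sintegral mu h = sintegral mu (h_Na \+ h_a)%R.
  apply: eq_sintegral => t /=; rewrite !measurable_realfun.mindicE in_a in_Na.
  by have [->|ta] := eqVneq t a; rewrite /= ?mulr0 ?mulr1 ?add0r ?addr0.
rewrite sintegralD (@sintegral_off1_eq0 h_a) ?adde0; last first.
  by move=> t ta /=; rewrite measurable_realfun.mindicE in_a (negbTE ta) mulr0.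
apply: ereal_sup_ubound; exists h_Na => // t.
rewrite patch_setT /= measurable_realfun.mindicE in_Na.
have [->|ta] := eqVneq t a; first by rewrite mulr0 psi0.
by rewrite mulr1 (le_trans _ (le_phi_psi t ta)) //; have := hle t; rewrite patch_setT.
Qed.

Lemma le_integral_off1 (phi psi : R -> \bar R) :
  (forall t, t != a -> 0 <= psi t) ->
  (forall t, t != a -> phi t <= psi t) -> \int[mu]_t phi t <= \int[mu]_t psi t.
Proof.
move=> psi0 le_phi_psi.
rewrite integralE [leRHS]integralE (@integral_off1_eq0 psi^\-); last 2 first.
- exact: funeneg_ge0.
- by move=> t ta; rewrite funenegE; apply/max_idPr; rewrite leeNl oppe0 psi0.
rewrite sube0; apply: le_trans (leeB (lexx _) (integral_ge0 _ _)) _.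
  by move=> t _; exact: funeneg_ge0.
rewrite sube0; apply: le_nnintegral_off1 => [t|t|t ta]; rewrite ?funepos_ge0 //.
apply: (@funepos_le _ _ [set t | t != a]); rewrite ?inE //.
by move=> s /set_mem; exact: le_phi_psi.
Qed.

End integral_off_point.

Section integral_scale.
Context d (T : measurableType d) (R : realType).
Variable mu : {measure set T -> \bar R}.
Local Open Scope ereal_scope.
Import HBNNSimple.

Lemma ge0_integralZl_le (psi : T -> \bar R) (k : R) : (0 <= k)%R ->
  (forall t, 0 <= psi t) ->
  \int[mu]_t (k%:E * psi t) <= k%:E * \int[mu]_t psi t.
Proof.
move=> k0 psi0; have [->|kn0] := eqVneq k 0%R.
  by rewrite mul0e; under eq_integral do rewrite mul0e; rewrite integral0.
have kp : (0 < k)%R by rewrite lt_def kn0.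
rewrite [X in _ <= _ * X]ge0_integralE; last by move=> t _; exact: psi0.
rewrite ge0_integralE; last by move=> t _; rewrite mule_ge0.
apply: ge_ereal_sup => _ [h hle <-].
have ki0 : (0 <= k^-1)%R by rewrite invr_ge0.
pose h' := scale_nnsfun h ki0.
have -> : sintegral mu h = sintegral mu (cst k \* h')%R.
  by apply: eq_sintegral => t /=; rewrite mulrA divff ?mul1r.
rewrite sintegralrM; apply: lee_wpmul2l; first by rewrite lee_fin.
apply: ereal_sup_ubound; exists h' => // t.
rewrite !patch_setT /= -(@lee_pmul2l _ k%:E) ?lte_fin //.
rewrite -EFinM mulrA divff ?mul1r //.
by have := hle t; rewrite !patch_setT.
Qed.

End integral_scale.

Section lebint.
Context {R : realType}.
Local Open Scope ereal_scope.

Lemma lebint_ge0 n (g : n.-tuple R -> \bar R) :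
  (forall v, 0 <= g v) -> 0 <= lebint g.
Proof.
elim: n g => [|n IH] g g0 /=; first exact: g0.
by apply: integral_ge0 => t _; apply: IH.
Qed.

Lemma le_lebint n (g1 g2 : n.-tuple R -> \bar R) :
  (forall v, g1 v <= g2 v) -> (forall v, 0 <= g2 v) -> lebint g1 <= lebint g2.
Proof.
elim: n g1 g2 => [|n IH] g1 g2 le_g g20 /=; first exact: le_g.
by apply: (le_integral_off1 (a := 0)) => t _; [exact: lebint_ge0 | exact: IH].
Qed.

Lemma lebint0 n : lebint (fun _ : n.-tuple R => 0) = 0.
Proof.
elim: n => [|n IH] //=.
by under eq_integral do rewrite IH; exact: integral0.
Qed.

Lemma lebintZl_le n (k : R) (g : n.-tuple R -> \bar R) : (0 <= k)%R ->
  (forall v, 0 <= g v) -> lebint (fun v => k%:E * g v) <= k%:E * lebint g.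
Proof.
move=> k0; elim: n g => [|n IH] g g0 //=.
apply: le_trans (ge0_integralZl_le _ k0 _); last by move=> t; exact: lebint_ge0.
apply: (le_integral_off1 (a := 0)) => t _; first by rewrite mule_ge0 ?lebint_ge0.
exact: IH.
Qed.

Lemma le_lebint_cons n (g1 g2 : n.+1.-tuple R -> \bar R) :
  (forall t, t != 0%R -> forall w, g1 (cons_tuple t w) <= g2 (cons_tuple t w)) ->
  (forall t, t != 0%R -> forall w, 0 <= g2 (cons_tuple t w)) ->
  lebint g1 <= lebint g2.
Proof.
move=> le_g g20 /=; apply: (le_integral_off1 (a := 0)) => t t0.
  exact: lebint_ge0 (g20 t t0).
exact: le_lebint (le_g t t0) (g20 t t0).
Qed.

End lebint.

Section euclidean.
Variables (R : realType) (n : nat).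
Implicit Types x v : n.-tuple R.

Lemma dotv_ge0 v : 0 <= dotv v v.
Proof. by apply: sumr_ge0 => i _; rewrite -expr2 sqr_ge0. Qed.

Lemma enorm_ge0 v : 0 <= enorm v.
Proof. exact: sqrtr_ge0. Qed.

Lemma enorm_sqr v : enorm v ^+ 2 = dotv v v.
Proof. by rewrite sqr_sqrtr // dotv_ge0. Qed.

Lemma normr_tnth_le_enorm v i : `|tnth v i| <= enorm v.
Proof.
rewrite -sqrtr_sqr ler_sqrt ?dotv_ge0 // /dotv (bigD1 i) //= expr2 lerDl.
by apply: sumr_ge0 => j _; rewrite -expr2 sqr_ge0.
Qed.

Lemma enorm_gt0 v i : tnth v i != 0 -> 0 < enorm v.
Proof.
by move=> vi0; apply: lt_le_trans (normr_tnth_le_enorm v i); rewrite normr_gt0.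
Qed.

Definition norm1 x := \sum_i `|tnth x i|.

Lemma norm1_ge0 x : 0 <= norm1 x.
Proof. exact: sumr_ge0. Qed.

Lemma enorm_subv_sqr_ge x v :
  enorm v ^+ 2 - 2 * norm1 x * enorm v <= enorm (subv x v) ^+ 2.
Proof.
rewrite !enorm_sqr /dotv /norm1 mulr_sumr mulr_suml -sumrB.
apply: ler_sum => i _; rewrite tnth_mktuple.
have vi_le := normr_tnth_le_enorm v i.
have xv_le : tnth x i * tnth v i <= `|tnth x i| * enorm v.
  by apply: le_trans (ler_norm _) _; rewrite normrM ler_wpM2l.
nra.
Qed.

Lemma enorm_subv_ge x v : enorm v - 2 * norm1 x <= enorm (subv x v).
Proof.
have := enorm_subv_sqr_ge x v; have := norm1_ge0 x.
have := enorm_ge0 v; have := enorm_ge0 (subv x v); nra.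
Qed.

End euclidean.

Section radial_profile.
Variables (R : realType) (nu : R -> R) (a1 : R).
Hypothesis nu_ge0 : forall r, 0 < r -> 0 <= nu r.
Hypothesis nu_nonincr : forall r s, 0 < r -> r <= s -> nu s <= nu r.
Hypothesis nu_le_shift1 : forall r, 1 <= r -> nu r <= a1 * nu (r + 1).
Hypothesis nu_le_double : forall r, 0 < r -> r <= 1 -> nu r <= a1 * nu (2 * r).

Let A := maxr a1 1.

Let A_ge1 : 1 <= A. Proof. by rewrite le_max lexx orbT. Qed.

Lemma nu_le_shiftn (k : nat) r : 1 <= r -> nu r <= A ^+ k * nu (r + k%:R).
Proof.
move=> r1; elim: k => [|k IH]; first by rewrite expr0 mul1r addr0.
apply: (le_trans IH); rewrite exprSr -mulrA ler_wpM2l ?exprn_ge0 //.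
  by apply: le_trans A_ge1.
rewrite -addn1 natrD addrA; have := ler0n R k => k0.
apply: le_trans (nu_le_shift1 _) _; first by lra.
by rewrite ler_wpM2r ?nu_ge0 ?le_max ?lexx //; lra.
Qed.

Lemma nu_eq0 M : 0 < M -> nu M = 0 -> forall r, 0 < r -> nu r = 0.
Proof.
move=> M0 nuM0.
have nu_eq0_ge1 r : 1 <= r -> nu r = 0.
  move=> r1; apply/eqP; rewrite eq_le nu_ge0 ?andbT; last by lra.
  have M_lt := truncnS_gt M.
  apply: le_trans (nu_le_shiftn (truncn M).+1 r1) _.
  rewrite -(mulr0 (A ^+ (truncn M).+1)) ler_wpM2l ?exprn_ge0 //.
    by apply: le_trans A_ge1.
  by rewrite -nuM0 nu_nonincr //; lra.
have nu_eq0_pow2 (j : nat) r : 0 < r -> 1 <= 2 ^+ j * r -> nu r = 0.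
  elim: j r => [|j IH] r r0; first by rewrite expr0 mul1r; exact: nu_eq0_ge1.
  move=> r_large; have [r1|r1] := lerP 1 r; first exact: nu_eq0_ge1.
  apply/eqP; rewrite eq_le nu_ge0 ?andbT //.
  rewrite (le_trans (nu_le_double r0 (ltW r1))) // (IH (2 * r)) ?mulr0 //.
    by lra.
  by rewrite mulrA -exprSr.
move=> r r0; apply: (nu_eq0_pow2 (truncn r^-1).+1) => //.
have r_inv_lt := truncnS_gt r^-1.
have pow2_ge : ((truncn r^-1).+1%:R : R) <= 2 ^+ (truncn r^-1).+1.
  by rewrite -natrX ler_nat ltnW // ltn_expl.
have : r^-1 * r = 1 by rewrite mulVf // gt_eqF.
nra.
Qed.

Lemma nu_le_far L r s : 0 <= L -> 1 <= r - L -> r - L <= s ->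
  nu s <= A ^+ (truncn L).+1 * nu r.
Proof.
move=> L0 rL1 rLs; have L_lt := truncnS_gt L.
apply: le_trans (nu_nonincr _ rLs) _; first by lra.
apply: le_trans (nu_le_shiftn (truncn L).+1 rL1) _.
by rewrite ler_wpM2l ?exprn_ge0 ?nu_nonincr //; [exact: le_trans A_ge1|lra|lra].
Qed.

Lemma minr_nu_le L : 0 <= L -> (forall r, 0 < r -> 0 < nu r) ->
  exists2 C, 0 <= C &
    forall r s, 0 < r -> r - L <= s -> minr (nu s) 1 <= C * minr (nu r) 1.
Proof.
move=> L0 nu_gt0; set K := A ^+ (truncn L).+1; set c := minr (nu (L + 1)) 1.
have K1 : 1 <= K by rewrite exprn_ege1.
have c0 : 0 < c by rewrite lt_min ltr01 nu_gt0 //; lra.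
exists (maxr K c^-1) => [|r s r0 rLs]; first by rewrite le_max (le_trans ler01 K1).
have min_nu_r0 : 0 <= minr (nu r) 1 by rewrite le_min ler01 nu_ge0.
have [far|near] := lerP (L + 1) r.
  apply: (@le_trans _ _ (K * minr (nu r) 1)); last first.
    by rewrite ler_wpM2r // le_max lexx.
  have nu_s_le : nu s <= K * nu r by apply: nu_le_far => //; lra.
  have [_|_] := lerP (nu r) 1; first by rewrite ge_min nu_s_le.
  by rewrite mulr1 ge_min K1 orbT.
have c_le : c <= minr (nu r) 1.
  by rewrite /c le_min !ge_min lexx orbT andbT nu_nonincr //; lra.
apply: (@le_trans _ _ (c^-1 * minr (nu r) 1)); last first.
  by rewrite ler_wpM2r // le_max lexx orbT.
apply: (@le_trans _ _ 1); first by rewrite ge_min lexx orbT.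
by rewrite -[leLHS](mulVf (lt0r_neq0 c0)) ler_wpM2l // invr_ge0 ltW.
Qed.

Lemma nu_gt0 n : lebint (fun y : n.+1.-tuple R => (nu (enorm y))%:E) = +oo%E ->
  forall r, 0 < r -> 0 < nu r.
Proof.
move=> nu_infty r r0; rewrite lt_def nu_ge0 // andbT; apply/negP => /eqP nu_r0.
suff : (lebint (fun y : n.+1.-tuple R => (nu (enorm y))%:E) <= 0)%E.
  by rewrite nu_infty.
rewrite -(lebint0 n.+1); apply: le_lebint_cons => t t0 w //.
by rewrite (nu_eq0 r0 nu_r0) // (enorm_gt0 (i := ord0)).
Qed.

End radial_profile.

Theorem corollary5p3 (R : realType) (d : nat) (hd : (0 < d)%N)
  (nu : R -> R) (dO : measure_display) (O : measurableType dO)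
  (P : probability O R) (X : R -> O -> d.-tuple R) :
  H0_density d nu ->
  is_isotropic_pure_jump_levy P X nu ->
  H1_profile nu ->
  H2_harnack P X ->
  forall f : d.-tuple R -> R,
    measurable_fun [set: d.-tuple R] f ->
    (forall y, 0 <= f y) ->
    (lebint (fun y : d.-tuple R => (f y * minr (nu (enorm y)) 1)%:E) < +oo)%E ->
    forall x : d.-tuple R,
      (lebint (fun y : d.-tuple R => (f y * minr (nu (enorm (subv x y))) 1)%:E) < +oo)%E.
Proof.
case: d hd X => [//|n] _ X.
move=> [nu_ge0 _ nu_infty] _ [nu_nonincr _ [a1 [nu_le_shift1 nu_le_double]]] _.
move=> f _ f_ge0 F0_fin x.
have nu_pos := nu_gt0 nu_ge0 nu_nonincr nu_le_shift1 nu_le_double nu_infty.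
have L0 : 0 <= 2 * norm1 x by rewrite mulr_ge0 ?norm1_ge0.
have [C C0 nu_le_C] := minr_nu_le nu_ge0 nu_nonincr nu_le_shift1 L0 nu_pos.
set F0 := fun y => (f y * minr (nu (enorm y)) 1)%:E.
have F0_ge0 t : t != 0 -> forall w, (0 <= F0 (cons_tuple t w))%E.
  move=> t0 w; rewrite lee_fin mulr_ge0 // le_min ler01 nu_ge0 //.
  exact: (enorm_gt0 (i := ord0)).
have F0pos_le : (lebint F0^\+ <= lebint F0)%E.
  apply: le_lebint_cons => t t0 w; last exact: F0_ge0.
  by rewrite funeposE (max_idPl (F0_ge0 t t0 w)).
have F0pos_fin : (lebint F0^\+ \is a fin_num)%E.
  rewrite ge0_fin_numE; first exact: le_lt_trans F0pos_le F0_fin.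
  by apply: lebint_ge0 => v; exact: funepos_ge0.
apply: (@le_lt_trans _ _ (lebint (fun v => C%:E * F0^\+ v))%E).
  apply: le_lebint_cons => t t0 w; last by rewrite mule_ge0 ?lee_fin ?funepos_ge0.
  rewrite funeposE (max_idPl (F0_ge0 t t0 w)) -EFinM lee_fin mulrCA ler_wpM2l //.
  by apply: nu_le_C; [exact: (enorm_gt0 (i := ord0)) | exact: enorm_subv_ge].
apply: le_lt_trans (lebintZl_le C0 (fun v => funepos_ge0 F0 v)) _.
by rewrite -(fineK F0pos_fin) -EFinM ltry.
Qed.
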